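(* Let $A\in\mathbb{R}^{l_1\times n}$, let $x^{(2)}_1,\dots,x^{(2)}_{l_2}\in\mathbb{R}^n$ and $x^{(3)}_1,\dots,x^{(3)}_{l_3}\in\mathbb{R}^n$, let $0<\epsilon<1$, $\delta>0$, $A^{*}=(A^TA+\delta I)^{-1}$, and for $p\ge 1$ let $e_p\in\mathbb{R}^p$ be the all-ones vector. For $\lambda>0$ and multipliers $(\alpha_0,\alpha,\beta)\in\mathbb{R}\times[0,1]^{l_2}\times[0,1]^{l_3}$ put $$w_1=-\frac{1}{\lambda}A^{*}\Big(\alpha_0A^Te_{l_1}+\sum_{i=1}^{l_2}\alpha_i x^{(2)}_i+\sum_{k=1}^{l_3}\beta_k x^{(3)}_k\Big),\qquad b_1=\frac{\alpha_0}{\lambda},\qquad f_1(x)=x^Tw_1+b_1 .$$ Let $\lambda\mapsto(\alpha_0(\lambda),\alpha(\lambda),\beta(\lambda))$ be a solution path of the first QPP, i.e. for every $\lambda>0$ it satisfies, with $w_1,b_1,f_1$ built from $(\lambda,\alpha_0(\lambda),\alpha(\lambda),\beta(\lambda))$: (a) $\alpha_i(\lambda)=1$ if $-f_1(x^{(2)}_i)<1$, $\alpha_i(\lambda)=0$ if $-f_1(x^{(2)}_i)>1$, $\alpha_i(\lambda)\in[0,1]$ if $-f_1(x^{(2)}_i)=1$; (b) $\beta_k(\lambda)=1$ if $-f_1(x^{(3)}_k)<1-\epsilon$, $\beta_k(\lambda)=0$ if $-f_1(x^{(3)}_k)>1-\epsilon$, $\beta_k(\lambda)\in[0,1]$ if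 $-f_1(x^{(3)}_k)=1-\epsilon$; (c) $(l_1-e_{l_1}^TAA^{*}A^Te_{l_1})\alpha_0+\sum_{i=1}^{l_2}(1-e_{l_1}^TAA^{*}x^{(2)}_i)\alpha_i+\sum_{k=1}^{l_3}(1-e_{l_1}^TAA^{*}x^{(3)}_k)\beta_k=0$. Let $\lambda^{l}>\lambda^{l+1}>0$ be such that the index sets $\mathcal{E}_B(\lambda)=\{i:-f_1(x^{(2)}_i)=1\}$, $\mathcal{L}_B(\lambda)=\{i:-f_1(x^{(2)}_i)<1\}$, $\mathcal{R}_B(\lambda)=\{i:-f_1(x^{(2)}_i)>1\}$, $\mathcal{E}_C(\lambda)=\{k:-f_1(x^{(3)}_k)=1-\epsilon\}$, $\mathcal{L}_C(\lambda)=\{k:-f_1(x^{(3)}_k)<1-\epsilon\}$, $\mathcal{R}_C(\lambda)=\{k:-f_1(x^{(3)}_k)>1-\epsilon\}$ are constant for $\lambda\in(\lambda^{l+1},\lambda^{l}]$; denote them $\mathcal{E}^{1,l}_B,\mathcal{L}^{1,l}_B,\mathcal{R}^{1,l}_B,\mathcal{E}^{1,l}_C,\mathcal{L}^{1,l}_C,\mathcal{R}^{1,l}_C$, and denote by $\alpha_0^l,\alpha_i^l,\beta_k^l,w_1^l,f_1^l$ the values at $\lambda=\lambda^l$. Let $m_1=|\mathcal{E}^{1,l}_B|$, $m_2=|\mathcal{E}^{1,l}_C|$, let $X_B\in\mathbb{R}^{m_1\times n}$ (resp. $X_C\in\mathbb{R}^{m_2\times n}$) have rows $(x^{(2)}_i)^T$,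 $i\in\mathcal{E}^{1,l}_B$ (resp. $(x^{(3)}_k)^T$, $k\in\mathcal{E}^{1,l}_C$), and define $$\bar A^l=\begin{pmatrix} l_1-e_{l_1}^TAA^{*}A^Te_{l_1} & e_{m_1}^T-e_{l_1}^TAA^{*}X_B^T & e_{m_2}^T-e_{l_1}^TAA^{*}X_C^T\\ -e_{m_1}+X_BA^{*}A^Te_{l_1} & X_BA^{*}X_B^T & X_BA^{*}X_C^T\\ -e_{m_2}+X_CA^{*}A^Te_{l_1} & X_CA^{*}X_B^T & X_CA^{*}X_C^T\end{pmatrix},\qquad \bar b=\begin{pmatrix}0\\ e_{m_1}\\ (1-\epsilon)e_{m_2}\end{pmatrix}.$$ Assume $\bar A^l$ is invertible and write $(\bar A^l)^{-1}\bar b=(\vartheta_0^l,(\vartheta_i^l)_{i\in\mathcal{E}^{1,l}_B},(\nu_k^l)_{k\in\mathcal{E}^{1,l}_C})$ (entries in the order of the rows of $X_B$, $X_C$). Then for every $\lambda$ with $\lambda^{l}>\lambda>\lambda^{l+1}$: $\alpha_0(\lambda)=\alpha_0^l-(\lambda^l-\lambda)\vartheta_0^l$; $\alpha_i(\lambda)=\alpha_i^l-(\lambda^l-\lambda)\vartheta_i^l$ for $i\in\mathcal{E}^{1,l}_B$; $\beta_k(\lambda)=\beta_k^l-(\lambda^l-\lambda)\nu_k^l$ for $k\in\mathcal{E}^{1,l}_C$; so these are piecewise linear in $\lambda$. Moreover $$w_1=\frac{\lambda^l}{\lambda}(w_1^l+h_1^l)-h_1^l,\qquad f_1(x)=\frac{\lambda^l}{\lambda}\big(f_1^l(x)-h_2^l(x)\big)+h_2^l(x),$$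 so $w_1$ and $f_1$ are piecewise linear in $1/\lambda$, where $h_1^l=A^{*}\big(\vartheta_0^lA^Te_{l_1}+\sum_{i\in\mathcal{E}^{1,l}_B}\vartheta_i^lx^{(2)}_i+\sum_{k\in\mathcal{E}^{1,l}_C}\nu_k^lx^{(3)}_k\big)$ and $h_2^l(x)=\vartheta_0^l-x^Th_1^l$.
   Context: This concerns the first of the two quadratic programs of the twin multi-class support vector machine: given class-$+1$ samples (rows of $A$), class-$-1$ samples $x^{(2)}_i$ and remaining samples $x^{(3)}_k$, solve $\min_{w_1,b_1,\xi,\eta}\ \frac{\lambda}{2}\|Aw_1+b_1e_{l_1}\|^2+\sum_i\xi_i+\sum_k\eta_k$ subject to $-(w_1^Tx^{(2)}_i+b_1)+\xi_i\ge 1$, $-(w_1^Tx^{(3)}_k+b_1)+\eta_k\ge 1-\epsilon$, $\xi,\eta\ge 0$, where $\lambda=1/c_1$ is the regularization parameter; $\alpha_i,\beta_k$ are the Lagrange multipliers of the two families of inequality constraints and $\alpha_0=\lambda b_1$. Following the paper, the hyperplane is expressed in terms of the multipliers by the displayed formula for $w_1$ with the regularized inverse $A^{*}$, conditions (a)–(b) are the KKT complementarity relations and (c) is the stationarity condition in $b_1$ combined with that expression for $w_1$. The values $\lambda^l$ are consecutive breakpoints (''events'') of the path, i.e. values at which one of the index sets changes. *)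

From HB Require Import structures.
From mathcomp Require Import all_boot all_order all_algebra.
Set Implicit Arguments. Unset Strict Implicit. Unset Printing Implicit Defensive.
Import Order.TTheory GRing.Theory Num.Theory.
Local Open Scope ring_scope.

Definition sc (R : realFieldType) (M : 'M[R]_1) : R := M ord0 ord0.

Definition ones (R : realFieldType) (p : nat) : 'cV[R]_p := const_mx 1.

Definition Astar (R : realFieldType) (l1 n : nat) (A : 'M[R]_(l1, n)) (delta : R)
  : 'M[R]_n := invmx (A^T *m A + delta%:M).

Definition w1 (R : realFieldType) (l1 l2 l3 n : nat) (A : 'M[R]_(l1, n))
  (x2 : 'I_l2 -> 'cV[R]_n) (x3 : 'I_l3 -> 'cV[R]_n) (delta lam a0 : R)
  (a : 'I_l2 -> R) (b : 'I_l3 -> R) : 'cV[R]_n :=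
  - (lam^-1 *: (Astar A delta *m
      (a0 *: (A^T *m ones R l1) + \sum_(i < l2) a i *: x2 i
                                + \sum_(k < l3) b k *: x3 k))).

Definition b1 (R : realFieldType) (lam a0 : R) : R := a0 / lam.

Definition f1 (R : realFieldType) (l1 l2 l3 n : nat) (A : 'M[R]_(l1, n))
  (x2 : 'I_l2 -> 'cV[R]_n) (x3 : 'I_l3 -> 'cV[R]_n) (delta lam a0 : R)
  (a : 'I_l2 -> R) (b : 'I_l3 -> R) (x : 'cV[R]_n) : R :=
  sc (x^T *m w1 A x2 x3 delta lam a0 a b) + b1 lam a0.

Definition solution_path (R : realFieldType) (l1 l2 l3 n : nat) (A : 'M[R]_(l1, n))
  (x2 : 'I_l2 -> 'cV[R]_n) (x3 : 'I_l3 -> 'cV[R]_n) (eps delta : R)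
  (alpha0 : R -> R) (alpha : R -> 'I_l2 -> R) (beta : R -> 'I_l3 -> R) : Prop :=
  forall lam : R, 0 < lam ->
    let f := f1 A x2 x3 delta lam (alpha0 lam) (alpha lam) (beta lam) in
    let As := Astar A delta in
    let e := ones R l1 in
    (forall i, 0 <= alpha lam i <= 1) /\ (forall k, 0 <= beta lam k <= 1) /\
    (forall i : 'I_l2,
       (- f (x2 i) < 1 -> alpha lam i = 1) /\
       (- f (x2 i) > 1 -> alpha lam i = 0) /\
       (- f (x2 i) = 1 -> 0 <= alpha lam i <= 1)) /\
    (forall k : 'I_l3,
       (- f (x3 k) < 1 - eps -> beta lam k = 1) /\
       (- f (x3 k) > 1 - eps -> beta lam k = 0) /\
       (- f (x3 k) = 1 - eps -> 0 <= beta lam k <= 1)) /\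
    ((l1%:R - sc (e^T *m A *m As *m A^T *m e)) * alpha0 lam
     + \sum_(i < l2) (1 - sc (e^T *m A *m As *m x2 i)) * alpha lam i
     + \sum_(k < l3) (1 - sc (e^T *m A *m As *m x3 k)) * beta lam k = 0).

Section IndexSets.
Variables (R : realFieldType) (l1 l2 l3 n : nat) (A : 'M[R]_(l1, n))
  (x2 : 'I_l2 -> 'cV[R]_n) (x3 : 'I_l3 -> 'cV[R]_n) (eps delta : R)
  (alpha0 : R -> R) (alpha : R -> 'I_l2 -> R) (beta : R -> 'I_l3 -> R).

Definition f1_at (lam : R) (x : 'cV[R]_n) : R :=
  f1 A x2 x3 delta lam (alpha0 lam) (alpha lam) (beta lam) x.

Definition EB (lam : R) : {set 'I_l2} := [set i | - f1_at lam (x2 i) == 1].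
Definition LB (lam : R) : {set 'I_l2} := [set i | - f1_at lam (x2 i) < 1].
Definition RB (lam : R) : {set 'I_l2} := [set i | - f1_at lam (x2 i) > 1].
Definition EC (lam : R) : {set 'I_l3} := [set k | - f1_at lam (x3 k) == 1 - eps].
Definition LC (lam : R) : {set 'I_l3} := [set k | - f1_at lam (x3 k) < 1 - eps].
Definition RC (lam : R) : {set 'I_l3} := [set k | - f1_at lam (x3 k) > 1 - eps].
End IndexSets.

(* X_B: matrix whose rows are x_i^T for i in S, listed in increasing order *)
Definition Xrows (R : realFieldType) (l n : nat) (x : 'I_l -> 'cV[R]_n)
  (S : {set 'I_l}) : 'M[R]_(#|S|, n) :=
  \matrix_(j < #|S|) (x (enum_val j))^T.

Definition Abar (R : realFieldType) (l1 n m1 m2 : nat) (A : 'M[R]_(l1, n))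
  (delta : R) (XB : 'M[R]_(m1, n)) (XC : 'M[R]_(m2, n)) : 'M[R]_(1 + (m1 + m2)) :=
  let As := Astar A delta in
  let e := ones R l1 in
  block_mx
    ((l1%:R)%:M - e^T *m A *m As *m A^T *m e)
    (row_mx ((ones R m1)^T - e^T *m A *m As *m XB^T)
            ((ones R m2)^T - e^T *m A *m As *m XC^T))
    (col_mx (- ones R m1 + XB *m As *m A^T *m e)
            (- ones R m2 + XC *m As *m A^T *m e))
    (block_mx (XB *m As *m XB^T) (XB *m As *m XC^T)
              (XC *m As *m XB^T) (XC *m As *m XC^T)).

Definition bbar (R : realFieldType) (m1 m2 : nat) (eps : R) : 'cV[R]_(1 + (m1 + m2)) :=
  col_mx 0 (col_mx (ones R m1) ((1 - eps) *: ones R m2)).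

From HB Require Import structures.
From mathcomp Require Import all_boot all_order all_algebra.
From mathcomp Require Import ring lra.
Import Order.TTheory GRing.Theory Num.Theory.

(* While lambda runs through (lambda^{l+1}, lambda^l] the index sets stay fixed.
   Complementarity then freezes every multiplier outside the elbow sets E_B, E_C,
   and for i in E_B (k in E_C) the elbow equation -f_1(x) = 1 (resp. 1 - eps)
   holds throughout.  Multiplied by lambda, these elbow equations and the
   stationarity condition (c) are affine in the multipliers, with right-hand
   sides lambda, lambda (1 - eps) and 0; subtracting their values at lambda and
   at lambda^l shows that \bar A^l maps the increment of (alpha_0, alpha_{E_B},
   beta_{E_C}) to (lambda - lambda^l) \bar b.  Inverting \bar A^l makes the
   multipliers affine in lambda, hence the vector
   alpha_0 A^T e + sum_i alpha_i x_i + sum_k beta_k x_k is affine in lambda, and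
   w_1 = -(1/lambda) A^* (that vector) and f_1 are affine in 1/lambda. *)

Set Implicit Arguments.
Unset Strict Implicit.
Unset Printing Implicit Defensive.

Local Open Scope ring_scope.

Lemma sc_is_linear (R : realFieldType) : linear_for *%R (@sc R).
Proof. by move=> a M N; rewrite /sc !mxE. Qed.

HB.instance Definition _ (R : realFieldType) :=
  GRing.isLinear.Build R 'M[R]_1 R *%R (@sc R) (@sc_is_linear R).

Section Scalars.
Variable R : realFieldType.

Lemma sc_scalar (a : R) : sc a%:M = a.
Proof. by rewrite /sc mxE mulr1n. Qed.

Lemma sc_inj : injective (@sc R).
Proof. by move=> M N eqMN; apply/matrixP => i j; rewrite !ord1. Qed.

Lemma sc_ones_mul m (v : 'cV[R]_m) : sc ((ones R m)^T *m v) = \sum_j v j ord0.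
Proof. by rewrite /sc mxE; apply: eq_bigr => j _; rewrite !mxE mul1r. Qed.

Lemma sc_mulmx_sum m (I : finType) (u : 'rV[R]_m) (c : I -> R) (z : I -> 'cV[R]_m) :
  sc (u *m \sum_i c i *: z i) = \sum_i c i * sc (u *m z i).
Proof.
by rewrite mulmx_sumr linear_sum; apply: eq_bigr => i _; rewrite -scalemxAr linearZ.
Qed.

End Scalars.

Section Rows.
Variables (R : realFieldType) (l n : nat) (x : 'I_l -> 'cV[R]_n) (S : {set 'I_l}).

Lemma Xrows_mul (v : 'cV[R]_n) :
  Xrows x S *m v = \col_j sc ((x (enum_val j))^T *m v).
Proof.
apply/matrixP => j k; rewrite ord1 !mxE /sc mxE.
by apply: eq_bigr => i _; rewrite !mxE.
Qed.

Lemma trXrows_mul (c : 'cV[R]_#|S|) :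
  (Xrows x S)^T *m c = \sum_j c j ord0 *: x (enum_val j).
Proof.
apply/matrixP => i k; rewrite !mxE summxE; apply: eq_bigr => j _.
by rewrite !mxE ord1 mulrC.
Qed.

End Rows.

Lemma big_enum_val_supp (V : zmodType) l (S : {set 'I_l}) (F : 'I_l -> V) :
  (forall i, i \notin S -> F i = 0) -> \sum_i F i = \sum_(j < #|S|) F (enum_val j).
Proof.
move=> F0; rewrite (bigID (mem S)) /= [X in _ + X]big1 ?addr0 //.
by rewrite big_enum_val.
Qed.

Section AbarProduct.
Variables (R : realFieldType) (l1 n m1 m2 : nat) (A : 'M[R]_(l1, n)) (delta : R).
Variables (XB : 'M[R]_(m1, n)) (XC : 'M[R]_(m2, n)).
Variables (d0 : R) (dB : 'cV[R]_m1) (dC : 'cV[R]_m2).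

Local Notation As := (Astar A delta).
Local Notation e := (ones R l1).
Local Notation g := (d0 *: (A^T *m e) + XB^T *m dB + XC^T *m dC).

Lemma mul_Abar_col :
  Abar A delta XB XC *m col_mx d0%:M (col_mx dB dC) =
  col_mx ((l1%:R * d0)%:M + (ones R m1)^T *m dB + (ones R m2)^T *m dC
            - e^T *m A *m As *m g)
         (col_mx (XB *m As *m g - d0 *: ones R m1)
                 (XC *m As *m g - d0 *: ones R m2)).
Proof.
rewrite /Abar mul_block_col mul_row_col mul_col_mx mul_block_col add_col_mx.
rewrite !mul_mx_scalar !mulmxDr -!scalemxAr !mulmxA !mulmxBl !scalerBr.
congr col_mx; [|congr col_mx].
- rewrite scale_scalar_mx mulrC !opprD !addrA.
  by rewrite -!(addrAC _ (- (d0 *: _))) -!(addrAC _ (- (_ *m XB^T *m dB))).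
- by rewrite scalerDr scalerN [RHS]addrC !addrA.
- by rewrite scalerDr scalerN [RHS]addrC !addrA.
Qed.
End AbarProduct.

Lemma complementarity_eq (R : realDomainType) (t y y' a a' : R) :
  y' != t -> (y < t) = (y' < t) -> (t < y) = (t < y') ->
  (y < t -> a = 1) -> (t < y -> a = 0) ->
  (y' < t -> a' = 1) -> (t < y' -> a' = 0) -> a = a'.
Proof.
move=> y'_neq_t eq_lt eq_gt a1 a0 a'1 a'0.
case: ltgtP y'_neq_t => [y'_lt | y'_gt | //] _.
- by rewrite a'1 // a1 // eq_lt.
- by rewrite a'0 // a0 // eq_gt.
Qed.

Section DualCombination.
Variables (R : realFieldType) (l1 l2 l3 n : nat) (A : 'M[R]_(l1, n)).
Variables (x2 : 'I_l2 -> 'cV[R]_n) (x3 : 'I_l3 -> 'cV[R]_n) (delta : R).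

Local Notation As := (Astar A delta).
Local Notation e := (ones R l1).

Definition dual_comb (a0 : R) (a : 'I_l2 -> R) (b : 'I_l3 -> R) : 'cV[R]_n :=
  a0 *: (A^T *m e) + \sum_i a i *: x2 i + \sum_k b k *: x3 k.

Lemma dual_combB a0 a b a0' a' b' :
  dual_comb a0 a b - dual_comb a0' a' b' =
  dual_comb (a0 - a0') (fun i => a i - a' i) (fun k => b k - b' k).
Proof.
rewrite /dual_comb scalerBl.
under [in RHS]eq_bigr do rewrite scalerBl.
under [X in _ = _ + _ + X]eq_bigr do rewrite scalerBl.
rewrite !sumrB [in LHS]opprD [in LHS]addrACA; congr (_ + _).
by rewrite opprD addrACA.
Qed.

Lemma w1E lam a0 a b :
  w1 A x2 x3 delta lam a0 a b = - (lam^-1 *: (As *m dual_comb a0 a b)).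
Proof. by []. Qed.

Lemma oppf1E lam a0 a b x :
  - f1 A x2 x3 delta lam a0 a b x =
  lam^-1 * (sc (x^T *m As *m dual_comb a0 a b) - a0).
Proof.
by rewrite /f1 w1E /b1 mulmxN -scalemxAr mulmxA linearN linearZ /=; ring.
Qed.

Lemma oppf1_eq lam a0 a b x t : 0 < lam ->
  - f1 A x2 x3 delta lam a0 a b x = t ->
  sc (x^T *m As *m dual_comb a0 a b) - a0 = lam * t.
Proof. by move=> lam_gt0; rewrite oppf1E => <-; rewrite mulVKf ?gt_eqF. Qed.

Lemma stationarityE a0 a b :
  (l1%:R - sc (e^T *m A *m As *m A^T *m e)) * a0
  + \sum_(i < l2) (1 - sc (e^T *m A *m As *m x2 i)) * a i
  + \sum_(k < l3) (1 - sc (e^T *m A *m As *m x3 k)) * b k =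
  l1%:R * a0 + \sum_i a i + \sum_k b k - sc (e^T *m A *m As *m dual_comb a0 a b).
Proof.
rewrite /dual_comb !mulmxDr !linearD -scalemxAr linearZ /= !sc_mulmx_sum.
under eq_bigr do rewrite mulrBl mul1r mulrC.
under [X in _ + X = _]eq_bigr do rewrite mulrBl mul1r mulrC.
by rewrite !sumrB !mulmxA; ring.
Qed.

Lemma w1_rescale lam lamL a0 a b a0L aL bL (g : 'cV[R]_n) :
  lam != 0 -> lamL != 0 ->
  dual_comb a0 a b - dual_comb a0L aL bL = (lam - lamL) *: g ->
  w1 A x2 x3 delta lam a0 a b =
  (lamL / lam) *: (w1 A x2 x3 delta lamL a0L aL bL + As *m g) - As *m g.
Proof.
move=> lam_neq0 lamL_neq0 /eqP; rewrite subr_eq => /eqP comb_eq.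
rewrite !w1E comb_eq mulmxDr -scalemxAr addrC.
move: (As *m g) (As *m dual_comb a0L aL bL) => P Q.
by apply/matrixP => i j; rewrite !mxE; field; apply/andP.
Qed.

Lemma f1_rescale lam lamL a0 a b a0L aL bL (g : 'cV[R]_n) theta0 x :
  lam != 0 -> lamL != 0 ->
  dual_comb a0 a b - dual_comb a0L aL bL = (lam - lamL) *: g ->
  a0 = a0L - (lamL - lam) * theta0 ->
  let h2 := theta0 - sc (x^T *m (As *m g)) in
  f1 A x2 x3 delta lam a0 a b x =
  (lamL / lam) * (f1 A x2 x3 delta lamL a0L aL bL x - h2) + h2.
Proof.
move=> lam_neq0 lamL_neq0 comb_eq a0_eq h2.
rewrite /h2 /f1 /b1 (w1_rescale lam_neq0 lamL_neq0 comb_eq) a0_eq.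
rewrite mulmxBr -scalemxAr mulmxDr !linearB linearZ linearD /=.
by field; apply/andP.
Qed.

End DualCombination.

Section SolutionPath.
Variables (R : realFieldType) (l1 l2 l3 n : nat) (A : 'M[R]_(l1, n)).
Variables (x2 : 'I_l2 -> 'cV[R]_n) (x3 : 'I_l3 -> 'cV[R]_n) (eps delta : R).
Variables (alpha0 : R -> R) (alpha : R -> 'I_l2 -> R) (beta : R -> 'I_l3 -> R).
Hypothesis path : solution_path A x2 x3 eps delta alpha0 alpha beta.

Local Notation As := (Astar A delta).
Local Notation e := (ones R l1).
Local Notation comb mu := (dual_comb A x2 x3 (alpha0 mu) (alpha mu) (beta mu)).
Local Notation EB := (EB A x2 x3 delta alpha0 alpha beta).
Local Notation LB := (LB A x2 x3 delta alpha0 alpha beta).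
Local Notation RB := (RB A x2 x3 delta alpha0 alpha beta).
Local Notation EC := (EC A x2 x3 eps delta alpha0 alpha beta).
Local Notation LC := (LC A x2 x3 eps delta alpha0 alpha beta).
Local Notation RC := (RC A x2 x3 eps delta alpha0 alpha beta).

Lemma alpha_off_elbow (lam mu : R) i : 0 < lam -> 0 < mu ->
  LB lam = LB mu -> RB lam = RB mu -> i \notin EB mu -> alpha lam i = alpha mu i.
Proof.
move=> lam_gt0 mu_gt0 eqL eqR; rewrite inE => i_off.
have [_ [_ [kkt _]]] := path lam_gt0; have [_ [_ [kkt' _]]] := path mu_gt0.
have [lt1 [gt1 _]] := kkt i; have [lt1' [gt1' _]] := kkt' i.
apply: (complementarity_eq i_off _ _ lt1 gt1 lt1' gt1').
- by move/setP/(_ i): eqL; rewrite !inE.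
- by move/setP/(_ i): eqR; rewrite !inE.
Qed.

Lemma beta_off_elbow (lam mu : R) k : 0 < lam -> 0 < mu ->
  LC lam = LC mu -> RC lam = RC mu -> k \notin EC mu -> beta lam k = beta mu k.
Proof.
move=> lam_gt0 mu_gt0 eqL eqR; rewrite inE => k_off.
have [_ [_ [_ [kkt _]]]] := path lam_gt0; have [_ [_ [_ [kkt' _]]]] := path mu_gt0.
have [lt1 [gt1 _]] := kkt k; have [lt1' [gt1' _]] := kkt' k.
apply: (complementarity_eq k_off _ _ lt1 gt1 lt1' gt1').
- by move/setP/(_ k): eqL; rewrite !inE.
- by move/setP/(_ k): eqR; rewrite !inE.
Qed.

Lemma elbowB mu i : 0 < mu -> i \in EB mu ->
  sc ((x2 i)^T *m As *m comb mu) - alpha0 mu = mu.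
Proof. by move=> mu_gt0; rewrite inE => /eqP/(oppf1_eq mu_gt0); rewrite mulr1. Qed.

Lemma elbowC mu k : 0 < mu -> k \in EC mu ->
  sc ((x3 k)^T *m As *m comb mu) - alpha0 mu = mu * (1 - eps).
Proof. by move=> mu_gt0; rewrite inE => /eqP/(oppf1_eq mu_gt0). Qed.

Lemma stationarity mu : 0 < mu ->
  sc (e^T *m A *m As *m comb mu) =
  l1%:R * alpha0 mu + \sum_i alpha mu i + \sum_k beta mu k.
Proof.
move=> mu_gt0; have [_ [_ [_ [_ /eqP]]]] := path mu_gt0.
by rewrite stationarityE subr_eq0 => /eqP.
Qed.

Section Segment.
Variables (lam lamL : R).
Hypotheses (lam_gt0 : 0 < lam) (lamL_gt0 : 0 < lamL).
Hypotheses (eqEB : EB lam = EB lamL) (eqLB : LB lam = LB lamL) (eqRB : RB lam = RB lamL).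
Hypotheses (eqEC : EC lam = EC lamL) (eqLC : LC lam = LC lamL) (eqRC : RC lam = RC lamL).

Local Notation SB := (EB lamL).
Local Notation SC := (EC lamL).
Local Notation d0 := (alpha0 lam - alpha0 lamL).
Local Notation dalpha j := (alpha lam (enum_val j) - alpha lamL (enum_val j)).
Local Notation dbeta k := (beta lam (enum_val k) - beta lamL (enum_val k)).
Local Notation Ab := (Abar A delta (Xrows x2 SB) (Xrows x3 SC)).
Local Notation sol := (invmx Ab *m bbar #|SB| #|SC| eps).

Lemma dual_comb_increment :
  comb lam - comb lamL =
  d0 *: (A^T *m e) + \sum_(j < #|SB|) dalpha j *: x2 (enum_val j)
                   + \sum_(k < #|SC|) dbeta k *: x3 (enum_val k).
Proof.
rewrite dual_combB /dual_comb (big_enum_val_supp (S := SB)).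
  rewrite (big_enum_val_supp (S := SC)) // => k k_off.
  by rewrite (beta_off_elbow lam_gt0 lamL_gt0 eqLC eqRC k_off) subrr scale0r.
move=> i i_off.
by rewrite (alpha_off_elbow lam_gt0 lamL_gt0 eqLB eqRB i_off) subrr scale0r.
Qed.

Lemma sum_dalpha : \sum_(j < #|SB|) dalpha j = \sum_i alpha lam i - \sum_i alpha lamL i.
Proof.
rewrite -sumrB (big_enum_val_supp (S := SB)) // => i i_off.
by rewrite (alpha_off_elbow lam_gt0 lamL_gt0 eqLB eqRB i_off) subrr.
Qed.

Lemma sum_dbeta : \sum_(k < #|SC|) dbeta k = \sum_k beta lam k - \sum_k beta lamL k.
Proof.
rewrite -sumrB (big_enum_val_supp (S := SC)) // => k k_off.
by rewrite (beta_off_elbow lam_gt0 lamL_gt0 eqLC eqRC k_off) subrr.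
Qed.

Lemma Abar_mul_increment :
  Ab *m col_mx d0%:M (col_mx (\col_j dalpha j) (\col_k dbeta k)) =
  (lam - lamL) *: bbar #|SB| #|SC| eps.
Proof.
have g_eq : d0 *: (A^T *m e) + (Xrows x2 SB)^T *m (\col_j dalpha j)
            + (Xrows x3 SC)^T *m (\col_k dbeta k) = comb lam - comb lamL.
  rewrite !trXrows_mul dual_comb_increment.
  by congr (_ + _ + _); apply: eq_bigr => j _; rewrite mxE.
rewrite mul_Abar_col g_eq /bbar !scale_col_mx scaler0.
congr col_mx; [|congr col_mx].
- have := stationarity lam_gt0; have := stationarity lamL_gt0.
  rewrite mulmxBr; move: (_ *m comb lam) (_ *m comb lamL) => P PL statL stat.
  apply: sc_inj; rewrite linear0 !linearB !linearD /= sc_scalar !sc_ones_mul stat statL.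
  under eq_bigr do rewrite mxE.
  under [X in _ + _ + X - _]eq_bigr do rewrite mxE.
  by rewrite sum_dalpha sum_dbeta; ring.
- apply/matrixP => j k; rewrite ord1 -mulmxA Xrows_mul !mxE mulmxA mulmxBr linearB /=.
  have jB : enum_val j \in EB lam by rewrite eqEB enum_valP.
  have := elbowB lam_gt0 jB; have := elbowB lamL_gt0 (enum_valP j).
  by lra.
- apply/matrixP => k i; rewrite ord1 -mulmxA Xrows_mul !mxE mulmxA mulmxBr linearB /=.
  have kC : enum_val k \in EC lam by rewrite eqEC enum_valP.
  have := elbowC lam_gt0 kC; have := elbowC lamL_gt0 (enum_valP k).
  by lra.
Qed.

Hypothesis Ab_unit : Ab \in unitmx.

Local Notation theta0 := (sol (lshift (#|SB| + #|SC|) ord0) ord0).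
Local Notation theta j := (sol (rshift 1 (lshift #|SC| j)) ord0).
Local Notation nu k := (sol (rshift 1 (rshift #|SB| k)) ord0).

Lemma multipliers_affine :
  [/\ alpha0 lam = alpha0 lamL - (lamL - lam) * theta0,
      forall j,
        alpha lam (enum_val j) = alpha lamL (enum_val j) - (lamL - lam) * theta j &
      forall k,
        beta lam (enum_val k) = beta lamL (enum_val k) - (lamL - lam) * nu k].
Proof.
have v_eq :
    col_mx d0%:M (col_mx (\col_j dalpha j) (\col_k dbeta k)) = (lam - lamL) *: sol.
  by rewrite scalemxAr -Abar_mul_increment mulKmx.
split=> [|j|k].
- move/matrixP/(_ (lshift _ ord0) ord0): v_eq.
  by rewrite col_mxEu !mxE eqxx mulr1n; lra.
- move/matrixP/(_ (rshift 1 (lshift _ j)) ord0): v_eq.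
  by rewrite col_mxEd col_mxEu !mxE; lra.
- move/matrixP/(_ (rshift 1 (rshift _ k)) ord0): v_eq.
  by rewrite !col_mxEd !mxE; lra.
Qed.

Lemma dual_comb_increment_theta :
  comb lam - comb lamL =
  (lam - lamL) *: (theta0 *: (A^T *m e) + \sum_(j < #|SB|) theta j *: x2 (enum_val j)
                                       + \sum_(k < #|SC|) nu k *: x3 (enum_val k)).
Proof.
have [alpha0_eq alpha_eq beta_eq] := multipliers_affine.
rewrite dual_comb_increment !scalerDr !scaler_sumr scalerA.
congr (_ + _ + _); first by rewrite alpha0_eq; congr (_ *: _); ring.
- by apply: eq_bigr => j _; rewrite scalerA alpha_eq; congr (_ *: _); ring.
- by apply: eq_bigr => k _; rewrite scalerA beta_eq; congr (_ *: _); ring.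
Qed.

End Segment.

End SolutionPath.

Theorem theorem1 (R : realFieldType) (l1 l2 l3 n : nat) (A : 'M[R]_(l1, n))
  (x2 : 'I_l2 -> 'cV[R]_n) (x3 : 'I_l3 -> 'cV[R]_n) (eps delta : R)
  (alpha0 : R -> R) (alpha : R -> 'I_l2 -> R) (beta : R -> 'I_l3 -> R)
  (lamL lamL1 : R) :
  0 < eps -> eps < 1 -> 0 < delta ->
  solution_path A x2 x3 eps delta alpha0 alpha beta ->
  0 < lamL1 -> lamL1 < lamL ->
  (forall lam, lamL1 < lam <= lamL ->
     EB A x2 x3 delta alpha0 alpha beta lam = EB A x2 x3 delta alpha0 alpha beta lamL /\
         LB A x2 x3 delta alpha0 alpha beta lam = LB A x2 x3 delta alpha0 alpha beta lamL /\
         RB A x2 x3 delta alpha0 alpha beta lam = RB A x2 x3 delta alpha0 alpha beta lamL /\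
         EC A x2 x3 eps delta alpha0 alpha beta lam = EC A x2 x3 eps delta alpha0 alpha beta lamL /\
         LC A x2 x3 eps delta alpha0 alpha beta lam = LC A x2 x3 eps delta alpha0 alpha beta lamL /\
         RC A x2 x3 eps delta alpha0 alpha beta lam = RC A x2 x3 eps delta alpha0 alpha beta lamL) ->
  let SB := EB A x2 x3 delta alpha0 alpha beta lamL in
  let SC := EC A x2 x3 eps delta alpha0 alpha beta lamL in
  let m1 := #|SB| in
  let m2 := #|SC| in
  let XB := Xrows x2 SB in
  let XC := Xrows x3 SC in
  let Ab := Abar A delta XB XC in
  Ab \in unitmx ->
  let sol := invmx Ab *m bbar m1 m2 eps in
  let theta0 := sol (lshift (m1 + m2) ord0) ord0 in
  let theta := fun j : 'I_m1 => sol (rshift 1 (lshift m2 j)) ord0 in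
  let nu := fun k : 'I_m2 => sol (rshift 1 (rshift m1 k)) ord0 in
  let h1 := Astar A delta *m
              (theta0 *: (A^T *m ones R l1)
               + \sum_(j < m1) theta j *: x2 (enum_val j)
               + \sum_(k < m2) nu k *: x3 (enum_val k)) in
  let h2 := fun x : 'cV[R]_n => theta0 - sc (x^T *m h1) in
  let w1l := w1 A x2 x3 delta lamL (alpha0 lamL) (alpha lamL) (beta lamL) in
  let f1l := f1_at A x2 x3 delta alpha0 alpha beta lamL in
  forall lam, lamL1 < lam < lamL ->
    [/\ alpha0 lam = alpha0 lamL - (lamL - lam) * theta0,
        (forall j : 'I_m1,
           alpha lam (enum_val j) = alpha lamL (enum_val j) - (lamL - lam) * theta j),
        (forall k : 'I_m2,
           beta lam (enum_val k) = beta lamL (enum_val k) - (lamL - lam) * nu k),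
        w1 A x2 x3 delta lam (alpha0 lam) (alpha lam) (beta lam)
          = (lamL / lam) *: (w1l + h1) - h1 &
        (forall x : 'cV[R]_n,
           f1_at A x2 x3 delta alpha0 alpha beta lam x
             = (lamL / lam) * (f1l x - h2 x) + h2 x)].
Proof.
move=> _ _ _ path lamL1_gt0 lamL1_lt_lamL same_sets SB SC m1 m2 XB XC Ab Ab_unit
  sol theta0 theta nu h1 h2 w1l f1l lam /andP[lamL1_lt_lam lam_lt_lamL].
have lam_gt0 : 0 < lam := lt_trans lamL1_gt0 lamL1_lt_lam.
have lamL_gt0 : 0 < lamL := lt_trans lamL1_gt0 lamL1_lt_lamL.
have lam_in : lamL1 < lam <= lamL by rewrite lamL1_lt_lam ltW.
have [eqEB [eqLB [eqRB [eqEC [eqLC eqRC]]]]] := same_sets lam lam_in.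
have [alpha0_eq alpha_eq beta_eq] :=
  multipliers_affine path lam_gt0 lamL_gt0 eqEB eqLB eqRB eqEC eqLC eqRC Ab_unit.
have comb_eq :=
  dual_comb_increment_theta path lam_gt0 lamL_gt0 eqEB eqLB eqRB eqEC eqLC eqRC Ab_unit.
have [lam_neq0 lamL_neq0] := (lt0r_neq0 lam_gt0, lt0r_neq0 lamL_gt0).
split=> //; first exact: w1_rescale lam_neq0 lamL_neq0 comb_eq.
by move=> x; apply: f1_rescale lam_neq0 lamL_neq0 comb_eq alpha0_eq.
Qed.
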